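(* Let $V$ be a vector space over a field $F$ and $T\in OP(V)$. If $T$ has a vanishing polynomial, then there exists a unique monic polynomial $p_m\in F[x]$ of minimal degree among vanishing polynomials of $T$, and $p_m$ divides every vanishing polynomial of $T$.
   Context: $OP(V)$ is the set of all (not necessarily linear) maps $V\to V$, with pointwise addition and scalar multiplication, and composition as product; $T^0=I$ (identity), $T^{i}=T\circ T^{i-1}$. For $p(x)=\sum_{i=0}^m a_ix^i\in F[x]$, $p(T)$ is the map $v\mapsto\sum_{i=0}^m a_iT^i(v)$. A polynomial $p\in F[x]$ is a vanishing polynomial of $T$ if $p\neq0$ and $p(T)(v)=0$ for all $v\in V$. *)

From HB Require Import structures.
From mathcomp Require Import all_boot all_order all_algebra.
Set Implicit Arguments. Unset Strict Implicit. Unset Printing Implicit Defensive.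
Import GRing.Theory.
Local Open Scope ring_scope.

(* OP(V): arbitrary (not necessarily linear) maps V -> V.
   T^i := i-fold composition (T^0 = identity). *)
Definition op_pow (F : fieldType) (V : lmodType F) (T : V -> V) (i : nat) : V -> V :=
  fun v => iter i T v.

Definition poly_op (F : fieldType) (V : lmodType F) (p : {poly F}) (T : V -> V) : V -> V :=
  fun v => \sum_(i < size p) p`_i *: op_pow T i v.

Definition vanishing (F : fieldType) (V : lmodType F) (T : V -> V) (p : {poly F}) : Prop :=
  p != 0 /\ forall v : V, poly_op p T v = 0.

Definition min_vanishing (F : fieldType) (V : lmodType F) (T : V -> V) (p : {poly F}) : Prop :=
  vanishing T p /\ forall q : {poly F}, vanishing T q -> (size p <= size q)%N.

From mathcomp Require Import all_boot all_order all_algebra.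
From Stdlib Require Import Classical.
Local Open Scope ring_scope.
Import GRing.Theory.
Set Implicit Arguments. Unset Strict Implicit.

(* Although T need not be linear, [p |-> p(T) v] is linear in p and
   (p 'X)(T) v = p(T) (T v); hence the polynomials killing T form an ideal
   of F[x].  A vanishing polynomial of minimal degree generates it, since the
   remainder of any vanishing q by it also kills T and has smaller degree; the
   monic generator is unique. *)

Section PolyOp.
Variables (F : fieldType) (V : lmodType F) (T : V -> V).

Definition kills (p : {poly F}) := forall v, poly_op p T v = 0.

Lemma poly_op_widen (p : {poly F}) v n : (size p <= n)%N ->
  poly_op p T v = \sum_(i < n) p`_i *: iter i T v.
Proof.
move=> le_p_n; rewrite /poly_op /op_pow.
rewrite (big_ord_widen n (fun i => p`_i *: iter i T v)) // big_mkcond.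
apply: eq_bigr => i _; case: ifP => // /negbT; rewrite -leqNgt => le_p_i.
by rewrite nth_default // scale0r.
Qed.

Lemma poly_opD (p q : {poly F}) v :
  poly_op (p + q) T v = poly_op p T v + poly_op q T v.
Proof.
pose n := maxn (size p) (size q).
have le_pq : (size (p + q)%R <= n)%N := size_polyD p q.
rewrite (poly_op_widen v le_pq) (poly_op_widen v (leq_maxl (size p) (size q))).
rewrite (poly_op_widen v (leq_maxr (size p) (size q))) -big_split /=.
by apply: eq_bigr => i _; rewrite coefD scalerDl.
Qed.

Lemma poly_opZ c (p : {poly F}) v : poly_op (c *: p) T v = c *: poly_op p T v.
Proof.
rewrite (poly_op_widen v (size_scale_leq c p)) scaler_sumr.
by apply: eq_bigr => i _; rewrite coefZ scalerA.
Qed.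

Lemma poly_opB (p q : {poly F}) v :
  poly_op (p - q) T v = poly_op p T v - poly_op q T v.
Proof. by rewrite -[in RHS](subrK q p) [in RHS]poly_opD addrK. Qed.

Lemma poly_opMX (p : {poly F}) v : poly_op (p * 'X) T v = poly_op p T (T v).
Proof.
have le_pX : (size (p * 'X)%R <= 1 + size p)%N.
  by apply: leq_trans (size_polyMleq _ _) _; rewrite size_polyX addnC.
rewrite (poly_op_widen v le_pX) big_split_ord /= big_ord1 coefMX /= scale0r add0r.
rewrite /poly_op /op_pow.
by apply: eq_bigr => i _; rewrite coefMX /= -iterSr.
Qed.

Lemma kills_mull (q p : {poly F}) : kills p -> kills (q * p).
Proof.
elim/poly_ind: q p => [|q c IHq] p kills_p v.
  by rewrite mul0r /poly_op size_poly0 big_ord0.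
rewrite mulrDl -mulrA (mulrC 'X) poly_opD IHq => [|w]; last first.
  by rewrite poly_opMX kills_p.
by rewrite mul_polyC poly_opZ kills_p scaler0 add0r.
Qed.

Lemma kills_modp (q p : {poly F}) : kills q -> kills p -> kills (q %% p).
Proof.
move=> kills_q kills_p v.
have -> : q %% p = q - q %/ p * p by rewrite {2}(divp_eq q p) addrC addKr.
by rewrite poly_opB kills_q (kills_mull _ kills_p) subr0.
Qed.

Lemma min_vanishing_exists (p : {poly F}) : vanishing T p ->
  exists pm, min_vanishing T pm.
Proof.
elim: (size p) {-2}p (leqnn (size p)) => [|n IHn] q le_q_n van_q.
  by case: van_q => /negP[]; rewrite -size_poly_eq0 -leqn0.
have [[r [van_r lt_r_q]] | no_smaller] :=
  classic (exists r, vanishing T r /\ (size r < size q)%N).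
  by apply: (IHn r) => //; rewrite -ltnS (leq_trans lt_r_q).
exists q; split=> // r van_r; rewrite leqNgt; apply/negP => lt_r_q.
by apply: no_smaller; exists r.
Qed.

Lemma min_vanishing_dvdp (pm q : {poly F}) :
  min_vanishing T pm -> vanishing T q -> pm %| q.
Proof.
move=> [[pm_neq0 kills_pm] pm_min] [_ kills_q].
apply/modp_eq0P/eqP; apply: contraT => mod_neq0.
have /pm_min : vanishing T (q %% pm) by split; last exact: kills_modp.
by rewrite leqNgt ltn_modp pm_neq0.
Qed.

Lemma min_vanishingZ c (p : {poly F}) : c != 0 ->
  min_vanishing T p -> min_vanishing T (c *: p).
Proof.
move=> c_neq0 [[p_neq0 kills_p] p_min].
split; last by move=> q /p_min; rewrite size_scale.
by split=> [|v]; rewrite ?scale_poly_eq0 ?negb_or ?c_neq0 // poly_opZ kills_p scaler0.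
Qed.

Lemma monic_min_vanishing_uniq (p q : {poly F}) :
  p \is monic -> q \is monic -> min_vanishing T p -> min_vanishing T q -> p = q.
Proof.
move=> mon_p mon_q min_p min_q; apply/eqP; rewrite -eqp_monic //.
by rewrite /eqp (min_vanishing_dvdp min_p min_q.1) (min_vanishing_dvdp min_q min_p.1).
Qed.

End PolyOp.

Theorem mainTheorem13 (F : fieldType) (V : lmodType F) (T : V -> V) :
  (exists p : {poly F}, vanishing T p) ->
  exists pm : {poly F},
    [/\ pm \is monic /\ min_vanishing T pm,
        (forall q : {poly F}, q \is monic -> min_vanishing T q -> q = pm)
      & (forall q : {poly F}, vanishing T q -> pm %| q)].
Proof.
move=> [p /min_vanishing_exists [p0 min_p0]].
have lc_neq0 : lead_coef p0 != 0 by rewrite lead_coef_eq0; case: min_p0 => [[]].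
pose pm := (lead_coef p0)^-1 *: p0.
have mon_pm : pm \is monic by apply/monicP; rewrite lead_coefZ mulVf.
have min_pm : min_vanishing T pm by apply: min_vanishingZ; rewrite ?invr_eq0.
exists pm; split=> // [q mon_q min_q|q].
  exact: monic_min_vanishing_uniq mon_q mon_pm min_q min_pm.
exact: min_vanishing_dvdp.
Qed.
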